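(* Let $s\ge 1$, $i$ and $j'$ be integers with $s\le i\le 2s$ and $i-s\le j'\le s$. Then $$\sum_{t=0}^{2s-i}\frac{(-1)^t}{2s-t}\binom{2s-i}{t}\binom{2s-t-1-j'}{s-j'}=\frac{(-1)^{s+i+j'}}{i}\binom{s}{j'}\binom{2s}{i}^{-1}.$$
   Context: For an integer $b\ge 0$ and any integer $a$, $\binom{a}{b}=a(a-1)\cdots(a-b+1)/b!$ (so $\binom{a}{0}=1$). *)

From mathcomp Require Import all_boot all_order all_algebra.
Set Implicit Arguments. Unset Strict Implicit. Unset Printing Implicit Defensive.
Import Order.TTheory GRing.Theory Num.Theory.
Local Open Scope ring_scope.

Definition gbinom (a : int) (b : nat) : rat :=
  (\prod_(k < b) (a - k%:Z)%:~R) / (b`!)%:R.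

(* Write n = 2s - i, m = s - j and N = 2s.  The t-th summand is
   (-1)^t C(n,t) p(t) / (N - t), where p(t) = binom(N - 1 - j - t, m) is a
   polynomial of degree m <= n.  As p(t) - p(N) is divisible by t - N and an
   alternating binomial sum of order n kills every polynomial of degree < n,
   p(t) may be replaced by p(N).  What remains is the partial fraction
   expansion of (-1)^n n! / (N (N-1) ... (N-n)) = (-1)^n / (i C(N,i)), and
   p(N) = binom(-1-j, m) = (-1)^m C(s,j) by upper negation. *)

From mathcomp Require Import all_boot all_order all_algebra.
From mathcomp Require Import ring zify.
Import Order.TTheory GRing.Theory Num.Theory.
Local Open Scope ring_scope.

Section AlternatingBinomialSums.
Context {R : comNzRingType}.
Implicit Types (n k : nat) (f : nat -> R) (p : {poly R}).

Lemma sum_alt_binomS n f :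
  \sum_(t < n.+2) (-1) ^+ t * 'C(n.+1, t)%:R * f t =
  \sum_(t < n.+1) (-1) ^+ t * 'C(n, t)%:R * (f t - f t.+1).
Proof.
rewrite big_ord_recl [in RHS]big_ord_recl !bin0 /=.
under eq_bigr => t _ do rewrite /bump /= add1n binS natrD mulrDr mulrDl.
under [in RHS]eq_bigr => t _ do rewrite /bump /= add1n mulrBr.
rewrite big_split sumrB /= [X in _ + (X + _)]big_ord_recr big_ord_recl /=.
rewrite bin_small // bin0 mulr0 mul0r addr0 -sumrN.
under [X in _ = _ + (_ + X)]eq_bigr => t _ do rewrite exprS mulN1r !mulNr opprK.
under [X in _ + (_ + (_ + X)) = _]eq_bigr => t _ do rewrite /bump /= add1n !exprS !mulN1r opprK.
ring.
Qed.

Lemma sum_alt_binom_exp n k : (k < n)%N ->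
  \sum_(t < n.+1) (-1) ^+ t * 'C(n, t)%:R * t%:R ^+ k = 0 :> R.
Proof.
elim: n k => [//|n IHn] k lt_kn.
rewrite (sum_alt_binomS n (fun t => t%:R ^+ k)) /=.
have diff_exp t : t%:R ^+ k - t.+1%:R ^+ k = - \sum_(l < k) t%:R ^+ l *+ 'C(k, l) :> R.
  rewrite -addn1 natrD exprD1n big_ord_recr /= binn mulr1n.
  by rewrite opprD addrC -addrA addNr addr0.
under eq_bigr => t _ do rewrite diff_exp mulrN mulr_sumr.
rewrite sumrN exchange_big /= big1 ?oppr0 // => l _.
under eq_bigr => t _ do rewrite [_ * (_ *+ 'C(k, l))]mulrnAr.
by rewrite sumrMnl IHn ?mul0rn // (leq_trans (ltn_ord l)).
Qed.

Lemma sum_alt_binom_horner n p : (size p <= n)%N ->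
  \sum_(t < n.+1) (-1) ^+ t * 'C(n, t)%:R * p.[t%:R] = 0.
Proof.
move=> size_p.
under eq_bigr => t _ do rewrite horner_coef mulr_sumr.
rewrite exchange_big /= big1 // => l _.
under eq_bigr => t _ do rewrite mulrCA.
by rewrite -mulr_sumr sum_alt_binom_exp ?mulr0 // (leq_trans (ltn_ord l)).
Qed.

End AlternatingBinomialSums.

Section PartialFractions.
Context {F : fieldType}.
Implicit Types (n : nat) (c : F) (p : {poly F}).

Lemma sum_alt_binom_inv n c : (forall t, (t <= n)%N -> c != t%:R) ->
  \sum_(t < n.+1) (-1) ^+ t * 'C(n, t)%:R / (c - t%:R) =
  (-1) ^+ n * n`!%:R / \prod_(t < n.+1) (c - t%:R).
Proof.
elim: n c => [|n IHn] c c_out.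
  by rewrite big_ord1 big_ord1 fact0.
rewrite (sum_alt_binomS n (fun t => (c - t%:R)^-1)) /=.
have shift t : c - t.+1%:R = (c - 1) - t%:R by rewrite -natr1; ring.
under eq_bigr => t _ do rewrite shift mulrBr.
rewrite sumrB IHn => [|t le_tn]; last by rewrite c_out ?(leq_trans le_tn).
rewrite IHn => [|t le_tn]; last by rewrite subr_eq natr1 c_out.
have c0 : c != 0 by have := c_out 0%N; apply.
have cn : c - n.+1%:R != 0 by rewrite subr_eq0 c_out.
have nzP : \prod_(t < n.+1) (c - t%:R) != 0.
  by apply/prodf_neq0 => t _; rewrite subr_eq0 c_out // ltnW.
have prod_split : c * \prod_(t < n.+1) (c - 1 - t%:R) =
                  \prod_(t < n.+1) (c - t%:R) * (c - n.+1%:R).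
  transitivity (\prod_(t < n.+2) (c - t%:R)); last by rewrite big_ord_recr.
  rewrite [RHS]big_ord_recl subr0; congr (_ * _).
  by apply: eq_bigr => t _; rewrite shift.
have -> : \prod_(t < n.+1) (c - 1 - t%:R) =
          \prod_(t < n.+1) (c - t%:R) * (c - n.+1%:R) / c.
  by rewrite -prod_split [c * _]mulrC mulfK.
rewrite [in RHS]big_ord_recr /= factS exprS natrM.
by field; rewrite nat1r cn nzP.
Qed.

Lemma sum_alt_binom_horner_inv n p c :
  (size p <= n.+1)%N -> (forall t, (t <= n)%N -> c != t%:R) ->
  \sum_(t < n.+1) (-1) ^+ t * 'C(n, t)%:R * p.[t%:R] / (c - t%:R) =
  p.[c] * \sum_(t < n.+1) (-1) ^+ t * 'C(n, t)%:R / (c - t%:R).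
Proof.
move=> size_p c_out.
have /factor_theorem[q Dq] : root (p - p.[c]%:P) c.
  by rewrite rootE !hornerE subrr.
have size_q : (size q <= n)%N.
  have [->|nz_q] := eqVneq q 0; first by rewrite size_poly0.
  have := size_polyD p (- p.[c]%:P).
  rewrite Dq size_Mmonic ?monicXsubC // size_XsubC addn2 size_polyN /= => le_q.
  by rewrite -ltnS (leq_trans le_q) // geq_max size_p (leq_trans (size_polyC_leq1 _)).
have horner_p x : p.[x] = p.[c] + q.[x] * (x - c).
  by rewrite -hornerXsubC -hornerM -Dq hornerD hornerN hornerC addrC subrK.
rewrite mulr_sumr -[RHS]subr0.
rewrite -[X in _ = _ - X](sum_alt_binom_horner _ _ size_q) -sumrB.
apply: eq_bigr => t _; rewrite horner_p.
have ct : c - t%:R != 0 by rewrite subr_eq0 c_out // -ltnS.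
by field.
Qed.

End PartialFractions.

Lemma prod_natr_sub (R : pzRingType) (a b : nat) :
  \prod_(k < b) (a%:R - k%:R : R) = (a ^_ b)%:R.
Proof.
elim: b => [|b IHb]; first by rewrite big_ord0 ffactn0.
rewrite big_ord_recr /= IHb ffactnSr natrM.
have [le_ba|lt_ab] := leqP b a; first by rewrite natrB.
by rewrite ffact_small // !mul0r.
Qed.

Lemma sum_alt_binom_inv_nat (R : numFieldType) n i : (0 < i)%N ->
  \sum_(t < n.+1) (-1) ^+ t * 'C(n, t)%:R / ((n + i)%:R - t%:R) =
  (-1) ^+ n / (i%:R * 'C(n + i, i)%:R) :> R.
Proof.
move=> i_gt0.
rewrite sum_alt_binom_inv => [|t le_tn]; last by rewrite eqr_nat; lia.
rewrite prod_natr_sub ffactnSr addKn -bin_ffact.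
rewrite -[X in 'C(_, X)](addnK i n) bin_sub ?leq_addl // !natrM.
have nz_fact : n`!%:R != 0 :> R by rewrite pnatr_eq0 -lt0n fact_gt0.
have nz_bin : 'C(n + i, i)%:R != 0 :> R by rewrite pnatr_eq0 -lt0n bin_gt0 leq_addl.
have nz_i : i%:R != 0 :> R by rewrite pnatr_eq0 -lt0n.
by field; rewrite nz_fact nz_bin nz_i.
Qed.

Lemma gbinom_nat (a b : nat) : gbinom a b = 'C(a, b)%:R.
Proof.
rewrite /gbinom.
under eq_bigr => k _ do rewrite rmorphB.
by rewrite prod_natr_sub -bin_ffact natrM mulfK // pnatr_eq0 -lt0n fact_gt0.
Qed.

Lemma gbinomN (a : int) (b : nat) :
  gbinom (- a) b = (-1) ^+ b * gbinom (a + b%:Z - 1) b.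
Proof.
rewrite /gbinom mulrA; congr (_ / _).
under eq_bigr => k _ do rewrite -opprD rmorphN.
rewrite prodrN card_ord; congr (_ * _).
rewrite (reindex_inj rev_ord_inj) /=; apply: eq_bigr => k _.
by congr (_%:~R); have := ltn_ord k; lia.
Qed.

Definition binom_poly (b : nat) : {poly rat} :=
  (b`!%:R)^-1 *: \prod_(k < b) ('X - k%:R%:P).

Lemma horner_binom_poly (b : nat) (z : int) :
  (binom_poly b).[z%:~R] = gbinom z b.
Proof.
rewrite /binom_poly /gbinom hornerZ horner_prod mulrC; congr (_ * _).
by apply: eq_bigr => k _; rewrite hornerXsubC rmorphB.
Qed.

Lemma size_binom_poly (b : nat) : (size (binom_poly b) <= b.+1)%N.
Proof.
rewrite (leq_trans (size_scale_leq _ _)) // size_prod_XsubC.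
by rewrite [index_enum _]unlock -enumT size_enum_ord.
Qed.

Lemma sum_alt_binom_gbinom (n m N : nat) (a : int) : (m <= n)%N -> (n < N)%N ->
  \sum_(t < n.+1) (-1) ^+ t * 'C(n, t)%:R * gbinom (a - t%:Z) m / (N%:R - t%:R) =
  gbinom (a - N%:Z) m * \sum_(t < n.+1) (-1) ^+ t * 'C(n, t)%:R / (N%:R - t%:R).
Proof.
move=> le_mn lt_nN.
pose p := binom_poly m \Po (a%:~R%:P - 'X).
have horner_p (x : nat) : p.[x%:R] = gbinom (a - x%:Z) m.
  rewrite horner_comp hornerD hornerN hornerC hornerX.
  by rewrite -[x%:R]/(x%:Z%:~R : rat) -rmorphB horner_binom_poly.
have size_p : (size p <= n.+1)%N.
  rewrite (leq_trans (size_comp_poly_leq _ _)) // -opprB size_polyN size_XsubC muln1.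
  by rewrite ltnS -subn1 leq_subLR add1n (leq_trans (size_binom_poly m)).
rewrite -horner_p -sum_alt_binom_horner_inv // => [|t le_tn]; last first.
  by rewrite eqr_nat; apply: contraTneq lt_nN => ->; rewrite -leqNgt.
by apply: eq_bigr => t _; rewrite horner_p.
Qed.

Theorem lemma7 (s i j : int) :
  1 <= s -> s <= i -> i <= 2 * s -> i - s <= j -> j <= s ->
  \sum_(t < (`|(2 * s - i)%R|%N).+1)
     ((-1 : rat) ^+ t / (2 * s - t%:Z)%:~R
        * gbinom (2 * s - i) t * gbinom (2 * s - t%:Z - 1 - j) `|(s - j)%R|%N)
  = (-1 : rat) ^ (s + i + j) / i%:~R * gbinom s `|j|%N / gbinom (2 * s) `|i|%N.
Proof.
move=> s_ge1 le_si le_i2s le_ij le_js.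
have [S eS] : exists S : nat, s = S by exists `|s|%N; lia.
have [I eI] : exists I : nat, i = I by exists `|i|%N; lia.
have [J eJ] : exists J : nat, j = J by exists `|j|%N; lia.
subst s i j.
have [n En] : exists n : nat, 2 * S%:Z - I%:Z = n by exists (2 * S - I)%N; lia.
have Em : S%:Z - J%:Z = (S - J)%N by lia.
rewrite En Em !absz_nat (_ : 2 * S%:Z = (n + I)%N); last by lia.
rewrite (eq_bigr (fun t : 'I_n.+1 => (-1) ^+ t * 'C(n, t)%:R
    * gbinom ((n + I)%N%:Z - 1 - J%:Z - t%:Z) (S - J) / ((n + I)%:R - t%:R))); last first.
  move=> t _; rewrite gbinom_nat rmorphB /= -!pmulrn.
  by rewrite (_ : _ - 1 - _ - _ = (n + I)%N%:Z - t%:Z - 1 - J%:Z); [ring | ring].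
rewrite sum_alt_binom_gbinom ?sum_alt_binom_inv_nat; try lia.
rewrite (_ : _ - (n + I)%N%:Z = - (J%:Z + 1)); last by ring.
rewrite gbinomN (_ : J%:Z + 1 + (S - J)%N - 1 = S); last by lia.
rewrite !gbinom_nat bin_sub // -pmulrn.
rewrite (_ : S%:Z + I%:Z + J%:Z = (n + (S - J) + 2 * (I + J - S))%N); last by lia.
rewrite -exprnP exprD exprM sqrrN expr1n mulr1 exprD.
have nz_I : I%:R != 0 :> rat by rewrite pnatr_eq0; lia.
have nz_bin : 'C(n + I, I)%:R != 0 :> rat by rewrite pnatr_eq0 -lt0n bin_gt0 leq_addl.
by field; rewrite nz_I nz_bin.
Qed.
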